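(* Let $k$ be a positive integer and let $T$ be a tournament on $n$ vertices with $n \geq (2k-1)2^{2k}$. Then $\mathrm{sinv}'_k(T) \leq \mathrm{sinv}_k(T) \leq 1$.
   Context: A tournament is an orientation of a complete graph. For a digraph $D$ and $X \subseteq V(D)$, inverting $X$ means reversing the direction of every arc of $D$ with both endvertices in $X$. A digraph $D$ is $k$-arc-strong if for every partition $(V_1,V_2)$ of $V(D)$ into nonempty sets there are at least $k$ arcs from $V_1$ to $V_2$; it is $k$-strong if $|V(D)|\ge k+1$ and $D-S$ is strongly connected for every $S\subseteq V(D)$ with $|S|<k$. $\mathrm{sinv}'_k(D)$ (resp. $\mathrm{sinv}_k(D)$) is the minimum number of sets whose successive inversion transforms $D$ into a $k$-arc-strong (resp. $k$-strong) digraph. *)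

From mathcomp Require Import all_boot.
Set Implicit Arguments. Unset Strict Implicit. Unset Printing Implicit Defensive.

(* A digraph on a finite vertex type V is given by its arc relation D : rel V
   (D x y = there is an arc x -> y).  Loops are excluded by tournaments. *)

Definition is_tournament (V : finType) (D : rel V) : Prop :=
  (forall x, ~~ D x x) /\
  (forall x y, x != y -> (D x y || D y x) && ~~ (D x y && D y x)).

Definition invert (V : finType) (X : {set V}) (D : rel V) : rel V :=
  fun x y => if (x \in X) && (y \in X) then D y x else D x y.

Definition invert_seq (V : finType) (Xs : seq {set V}) (D : rel V) : rel V :=
  foldl (fun D' X => invert X D') D Xs.

Definition strongly_connected_on (V : finType) (D : rel V) (U : {set V}) : Prop :=
  forall x y, x \in U -> y \in U ->
    connect (fun a b => [&& a \in U, b \in U & D a b]) x y.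

Definition k_arc_strong (V : finType) (k : nat) (D : rel V) : Prop :=
  forall V1 : {set V}, V1 != set0 -> ~: V1 != set0 ->
    k <= #|[set p : V * V | (p.1 \in V1) && (p.2 \notin V1) && D p.1 p.2]|.

Definition k_strong (V : finType) (k : nat) (D : rel V) : Prop :=
  k.+1 <= #|V| /\
  forall S : {set V}, #|S| < k -> strongly_connected_on D (~: S).

Definition reachable_by (V : finType) (P : rel V -> Prop) (D : rel V) (m : nat) : Prop :=
  exists Xs : seq {set V}, size Xs = m /\ P (invert_seq Xs D).

Definition is_min_inv (V : finType) (P : rel V -> Prop) (D : rel V) (s : nat) : Prop :=
  reachable_by P D s /\ forall m, reachable_by P D m -> s <= m.

Definition is_sinv (V : finType) (k : nat) (D : rel V) (s : nat) : Prop :=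
  is_min_inv (k_strong k) D s.
Definition is_sinv' (V : finType) (k : nat) (D : rel V) (s : nat) : Prop :=
  is_min_inv (k_arc_strong k) D s.

From mathcomp Require Import all_boot zify.
From Stdlib Require Import Classical.
Set Implicit Arguments. Unset Strict Implicit. Unset Printing Implicit Defensive.

(* Every tournament on W vertices has a vertex dominating at least (|W|-1)/2 of
   them, so picking such vertices greedily k times in T, and then k times in
   its converse inside the common out-neighbourhood, yields sets P, R of size k
   and Q of size at least 2k-1 (this is where n >= (2k-1) 2^(2k) is used) with
   P => Q, P => R and Q => R.  Inverting P u R turns them into a cyclic triple
   P -> Q -> R -> P of sets of size >= k, which stays strongly connected after
   deleting fewer than k vertices.  A vertex outside with fewer than k out- (or
   in-) neighbours in the triple is inverted too: since |P u R| = 2k and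
   |Q| >= 2k-1, it then has k neighbours in each direction.  The result is
   k-strong, hence k-arc-strong, so sinv'_k(T) <= sinv_k(T) <= 1. *)

Section Digraph.
Variable V : finType.
Implicit Types (D : rel V) (A B S U : {set V}).

Definition induced D U : rel V := fun a b => [&& a \in U, b \in U & D a b].

Lemma exists_notin_card_lt A S : #|S| < #|A| -> exists2 a, a \in A & a \notin S.
Proof.
move=> ltSA; apply/subsetPn; apply: contraTN ltSA => /subset_leq_card.
by rewrite leqNgt.
Qed.

Lemma cardsU_disjoint A B : [disjoint A & B] -> #|A :|: B| = #|A| + #|B|.
Proof. by move=> dAB; have := leq_card_setU A B; rewrite dAB => -[_ /eqP]. Qed.

Lemma connect_exit (e : rel V) A x y : connect e x y -> x \in A -> y \notin A ->
  exists a b, [/\ a \in A, b \notin A & e a b].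
Proof.
move=> /connectP [p]; elim: p x => [|z p IHp] x /=; first by move=> _ -> ->.
move=> /andP [exz pz] yl xA yA.
have [zA | zA] := boolP (z \in A); first exact: IHp pz yl zA yA.
by exists x, z.
Qed.

Lemma connect_induced1 D U a b : a \in U -> b \in U -> D a b ->
  connect (induced D U) a b.
Proof. by move=> aU bU Dab; apply: connect1; rewrite /induced aU bU Dab. Qed.

Lemma strongly_connected_on_hub D U h :
  (forall z, z \in U -> connect (induced D U) z h /\ connect (induced D U) h z) ->
  strongly_connected_on D U.
Proof. by move=> hub x y /hub [xh _] /hub [_ hy]; apply: connect_trans xh hy. Qed.

Lemma k_arc_cut_missing_arc D k (V1 : {set V}) x y :
  (forall S, #|S| < k -> strongly_connected_on D (~: S)) ->
  x \in V1 -> y \notin V1 -> ~~ D x y ->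
  k <= #|[set p : V * V | (p.1 \in V1) && (p.2 \notin V1) && D p.1 p.2]|.
Proof.
move=> strongD xV1 yV1 nDxy; set F := [set p | _].
rewrite leqNgt; apply/negP => ltFk.
(* Deleting, for each cut arc, an endpoint other than [x] and [y] separates [x] from [y]. *)
pose hit (p : V * V) := if p.1 == x then p.2 else p.1.
have hitF p : p \in F -> (hit p != x) && (hit p != y).
  rewrite inE /hit => /andP [/andP [p1V1 p2V1] Dp].
  have [p1x | p1x] := eqVneq p.1 x; last first.
    by rewrite p1x; apply: contraNneq yV1 => <-.
  apply/andP; split; first by apply: contraNneq p2V1 => ->.
  by apply: contraNneq nDxy => <-; rewrite -p1x.
have notin_hit z : z \in [set x; y] -> z \in ~: (hit @: F).
  rewrite !inE => xy_z; apply/imsetP => -[p pF zp].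
  by move: (hitF p pF) xy_z; rewrite -zp => /andP [/negbTE -> /negbTE ->].
have [a [b [aV1 bV1 /and3P [aS bS Dab]]]] :=
  connect_exit (strongD _ (leq_ltn_trans (leq_imset_card _ _) ltFk) x y
    (notin_hit x (set21 x y)) (notin_hit y (set22 x y))) xV1 yV1.
have abF : (a, b) \in F by rewrite inE /= aV1 bV1 Dab.
move: (imset_f hit abF); rewrite /hit /=.
by case: ifP => _ hS; [move: bS | move: aS]; rewrite inE hS.
Qed.

Lemma k_strong_arc_strong k D : k_strong k D -> k_arc_strong k D.
Proof.
move=> [kV strongD] V1 V1n0 V1Cn0; set F := [set p | _].
case: (pickP [pred p : V * V | [&& p.1 \in V1, p.2 \notin V1 & ~~ D p.1 p.2]]).
  by move=> [x y] /and3P [xV1 yV1 nDxy]; apply: k_arc_cut_missing_arc strongD xV1 yV1 nDxy.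
move=> complete; have sub : setX V1 (~: V1) \subset F.
  apply/subsetP => -[a b]; rewrite !inE /= => /andP [aV1 bV1].
  by move: (complete (a, b)); rewrite /= aV1 bV1 /=; case: (D a b).
apply: leq_trans (subset_leq_card sub); rewrite cardsX.
have := cardsC V1; rewrite -!card_gt0 in V1n0 V1Cn0; nia.
Qed.

End Digraph.

Section CyclicTriple.
Variables (V : finType) (D : rel V) (P Q R : {set V}).
Hypotheses (PQ : {in P & Q, forall p q, D p q}) (QR : {in Q & R, forall q r, D q r})
  (RP : {in R & P, forall r p, D r p}).

Lemma cyclic_triple_hub U p0 q0 r0 c :
  p0 \in P :&: U -> q0 \in Q :&: U -> r0 \in R :&: U -> c \in (P :|: Q :|: R) :&: U ->
  connect (induced D U) c p0 /\ connect (induced D U) p0 c.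
Proof.
rewrite !inE => /andP [p0P p0U] /andP [q0Q q0U] /andP [r0R r0U] /andP [cPQR cU].
have arc a b : a \in U -> b \in U -> D a b -> connect (induced D U) a b.
  exact: connect_induced1.
have p0q0 := arc _ _ p0U q0U (PQ p0P q0Q).
have q0r0 := arc _ _ q0U r0U (QR q0Q r0R).
have r0p0 := arc _ _ r0U p0U (RP r0R p0P).
case/orP: cPQR => [/orP [cP | cQ] | cR]; split.
- exact: connect_trans (arc _ _ cU q0U (PQ cP q0Q)) (connect_trans q0r0 r0p0).
- exact: connect_trans p0q0 (connect_trans q0r0 (arc _ _ r0U cU (RP r0R cP))).
- exact: connect_trans (arc _ _ cU r0U (QR cQ r0R)) r0p0.
- exact: arc _ _ p0U cU (PQ p0P cQ).
- exact: arc _ _ cU p0U (RP cR p0P).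
- exact: connect_trans p0q0 (arc _ _ q0U cU (QR q0Q cR)).
Qed.

Lemma k_strong_cyclic_triple k :
  k < #|V| -> k <= #|P| -> k <= #|Q| -> k <= #|R| ->
  (forall v, v \notin P :|: Q :|: R ->
     k <= #|[set c in P :|: Q :|: R | D v c]| /\ k <= #|[set c in P :|: Q :|: R | D c v]|) ->
  k_strong k D.
Proof.
move=> kV kP kQ kR deg; split=> // S ltSk.
have pick_out (A : {set V}) : k <= #|A| -> exists2 a, a \in A & a \in ~: S.
  move=> kA; have [a aA aS] := exists_notin_card_lt (leq_trans ltSk kA).
  by exists a; rewrite ?inE.
have [p0 p0P p0S] := pick_out _ kP.
have [q0 q0Q q0S] := pick_out _ kQ.
have [r0 r0R r0S] := pick_out _ kR.
have hubC c : c \in P :|: Q :|: R -> c \in ~: S ->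
    connect (induced D (~: S)) c p0 /\ connect (induced D (~: S)) p0 c.
  move=> cC cS; apply: (cyclic_triple_hub (q0 := q0) (r0 := r0));
    by rewrite in_setI; apply/andP.
apply: (@strongly_connected_on_hub _ _ _ p0) => z zS.
have [zC | zC] := boolP (z \in P :|: Q :|: R); first exact: hubC.
have [kout kin] := deg z zC.
have [c1 + c1S] := pick_out _ kout; rewrite inE => /andP [c1C Dzc1].
have [c2 + c2S] := pick_out _ kin; rewrite inE => /andP [c2C Dc2z].
split.
- exact: connect_trans (connect_induced1 zS c1S Dzc1) (hubC c1 c1C c1S).1.
- exact: connect_trans (hubC c2 c2C c2S).2 (connect_induced1 c2S zS Dc2z).
Qed.

End CyclicTriple.

Definition converse (V : finType) (D : rel V) : rel V := fun x y => D y x.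

Lemma invert_converse (V : finType) (X : {set V}) (D : rel V) x y :
  invert X (converse D) x y = invert X D y x.
Proof. by rewrite /invert /converse andbC. Qed.

Lemma tournament_converse (V : finType) (T : rel V) :
  is_tournament T -> is_tournament (converse T).
Proof.
move=> [irrT totT]; split=> // x y xy.
by have := totT x y xy; rewrite /converse; case: (T x y); case: (T y x).
Qed.

Section Tournament.
Variables (V : finType) (T : rel V).
Hypothesis tourT : is_tournament T.
Implicit Types (A B C W X Y : {set V}).

Lemma tournament_arc_neq x y : T x y -> x != y.
Proof. by case: tourT => irrT _; apply: contraTneq => ->. Qed.

Lemma tournament_arcs_disjoint A B : {in A & B, forall a b, T a b} -> [disjoint A & B].
Proof.
move=> AB; rewrite -setI_eq0; apply/set0Pn => -[x]; rewrite inE => /andP [xA xB].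
by have := tournament_arc_neq (AB _ _ xA xB); rewrite eqxx.
Qed.

Lemma tournament_split v Y : v \notin Y ->
  #|Y| <= #|[set c in Y | T v c]| + #|[set c in Y | T c v]|.
Proof.
case: tourT => _ totT vY; apply: leq_trans (leq_card_setU _ _).
apply: subset_leq_card; apply/subsetP => c cY; rewrite !inE cY /=.
have vc : v != c by apply: contraNneq vY => ->.
by have /andP [] := totT v c vc.
Qed.

Lemma card_in_ge_out_lt k v Y C : v \notin Y -> Y \subset C -> 2 * k - 1 <= #|Y| ->
  #|[set c in C | T v c]| < k -> k <= #|[set c in Y | T c v]|.
Proof.
move=> vY YC kY outk; have := tournament_split vY.
have : #|[set c in Y | T v c]| <= #|[set c in C | T v c]|.
  by apply/subset_leq_card/subsetP => c; rewrite !inE => /andP [/(subsetP YC) -> ->].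
lia.
Qed.

Lemma card_out_in_ge v W : v \in W ->
  #|W| <= #|[set u in W | T v u]| + #|[set u in W | T u v]| + 1.
Proof.
move=> vW; rewrite (cardsD1 v W) vW addnC leq_add2r.
apply: leq_trans (tournament_split (negbT (setD11 v W))) _.
by apply: leq_add; apply/subset_leq_card/subsetP => u; rewrite !inE => /andP [/andP [_ ->] ->].
Qed.

Lemma sum_card_out_in W :
  \sum_(v in W) #|[set u in W | T v u]| = \sum_(v in W) #|[set u in W | T u v]|.
Proof.
rewrite (eq_bigr (fun v => \sum_(u in W) T v u)) => [|v _]; last first.
  by rewrite -sum1dep_card big_mkcondr.
rewrite [RHS](eq_bigr (fun v => \sum_(u in W) T u v)) => [|v _]; last first.
  by rewrite -sum1dep_card big_mkcondr.
exact: exchange_big.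
Qed.

Lemma tournament_large_outdeg W : W != set0 ->
  exists2 v, v \in W & #|W| <= 2 * #|[set u in W | T v u]| + 1.
Proof.
move=> W0; apply/exists_inP; apply: contraT => /exists_inPn small.
have : \sum_(v in W) (2 * #|[set u in W | T v u]| + 2) <= \sum_(v in W) #|W|.
  by apply: leq_sum => v /small; rewrite -ltnNge; lia.
have : \sum_(v in W) #|W| <=
       \sum_(v in W) (#|[set u in W | T v u]| + #|[set u in W | T u v]| + 1).
  by apply: leq_sum => v; apply: card_out_in_ge.
rewrite !big_split /= -sum_card_out_in !sum_nat_const.
by rewrite -card_gt0 in W0; nia.
Qed.

Lemma greedy_dominating_set m W : 2 ^ m <= #|W| + 1 ->
  exists P W' : {set V}, [/\ P \subset W, W' \subset W, #|P| = m,
    {in P & W', forall p w, T p w} & #|W| + 1 <= 2 ^ m * (#|W'| + 1)].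
Proof.
elim: m W => [|m IHm] W leW.
  exists set0, W; split; rewrite ?sub0set ?cards0 ?mul1n //.
  by move=> p w; rewrite inE.
have W0 : W != set0 by rewrite -card_gt0; move: leW; rewrite expnS; lia.
have [v vW large] := tournament_large_outdeg W0.
set W1 := [set u in W | T v u] in large.
have W1W : W1 \subset W by apply/subsetP => u; rewrite inE => /andP [].
have [|P1 [W' [P1W1 W'W1 cP1 P1W' leW1]]] := IHm W1; first by move: leW; rewrite expnS; lia.
have vP1 : v \notin P1.
  by apply: contraTN isT => /(subsetP P1W1); rewrite inE => /andP [_ /tournament_arc_neq /eqP].
exists (v |: P1), W'; split.
- by rewrite subUset sub1set vW (subset_trans P1W1 W1W).
- exact: subset_trans W'W1 W1W.
- by rewrite cardsU1 vP1 cP1.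
- move=> p w; rewrite in_setU1 => /orP [/eqP -> | pP1] wW'; last exact: P1W'.
  by have := subsetP W'W1 w wW'; rewrite inE => /andP [].
- by rewrite expnS; nia.
Qed.

Lemma invert_repairs_low_outdeg k X A B C v :
  A \subset X -> [disjoint B & X] -> A :|: B \subset C -> v \in X -> v \notin A :|: B ->
  2 * k - 1 <= #|A| -> 2 * k - 1 <= #|B| -> #|[set c in C | T v c]| < k ->
  k <= #|[set c in C | invert X T v c]| /\ k <= #|[set c in C | invert X T c v]|.
Proof.
move=> AX BX; rewrite subUset in_setU negb_or => /andP [AC BC] vX /andP [vA vB] kA kB outk.
split.
- apply: leq_trans (card_in_ge_out_lt vA AC kA outk) (subset_leq_card _).
  apply/subsetP => c; rewrite !inE => /andP [cA Tcv].
  by rewrite (subsetP AC c cA) /invert vX (subsetP AX c cA).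
- apply: leq_trans (card_in_ge_out_lt vB BC kB outk) (subset_leq_card _).
  apply/subsetP => c; rewrite !inE => /andP [cB Tcv].
  by rewrite (subsetP BC c cB) /invert (disjointFr BX cB).
Qed.

End Tournament.

Lemma invert_repairs_low_degree (V : finType) (T : rel V) k (X A B C : {set V}) v :
  is_tournament T ->
  A \subset X -> [disjoint B & X] -> A :|: B \subset C -> v \in X -> v \notin A :|: B ->
  2 * k - 1 <= #|A| -> 2 * k - 1 <= #|B| ->
  (#|[set c in C | T v c]| < k) || (#|[set c in C | T c v]| < k) ->
  k <= #|[set c in C | invert X T v c]| /\ k <= #|[set c in C | invert X T c v]|.
Proof.
move=> tourT AX BX ABC vX vAB kA kB /orP [kout | kin].
  exact (invert_repairs_low_outdeg tourT AX BX ABC vX vAB kA kB kout).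
have [kin' kout'] :=
  invert_repairs_low_outdeg (tournament_converse tourT) AX BX ABC vX vAB kA kB kin.
split; [apply: leq_trans kout' _ | apply: leq_trans kin' _];
  by apply/eq_leq/eq_card => c; rewrite !in_set invert_converse.
Qed.

Lemma tournament_ordered_triple (V : finType) (T : rel V) k :
  is_tournament T -> (2 * k - 1) * 2 ^ (2 * k) <= #|V| ->
  exists P Q R : {set V}, [/\ #|P| = k, 2 * k - 1 <= #|Q|, #|R| = k,
    {in P & Q :|: R, forall p c, T p c} & {in Q & R, forall q r, T q r}].
Proof.
move=> tourT.
have -> : 2 ^ (2 * k) = 2 ^ k * 2 ^ k by rewrite -expnD addnn mul2n.
move=> leV; have pos2k : 0 < 2 ^ k by rewrite expn_gt0.
have leM : 2 ^ k * 2 ^ k <= #|V| + 1.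
  by case: k {pos2k} leV => [|k] leV; rewrite ?expn0 //; nia.
have [|P [W [_ _ cP PW leVW]]] := greedy_dominating_set tourT (m := k) (W := setT).
  by rewrite cardsT; nia.
have [|R [Q [RW QW cR RQ leWQ]]] :=
  greedy_dominating_set (tournament_converse tourT) (m := k) (W := W).
  by rewrite cardsT in leVW; nia.
exists P, Q, R; split=> //.
- by rewrite cardsT in leVW; nia.
- by move=> p c pP; rewrite inE => /orP [/(subsetP QW) | /(subsetP RW)]; apply: PW.
- by move=> q r qQ rR; apply: RQ.
Qed.

Lemma k_strong_invert_ordered_triple (V : finType) (T : rel V) k (P Q R : {set V}) :
  0 < k -> is_tournament T -> #|P| = k -> 2 * k - 1 <= #|Q| -> #|R| = k ->
  {in P & Q :|: R, forall p c, T p c} -> {in Q & R, forall q r, T q r} ->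
  exists X : {set V}, k_strong k (invert X T).
Proof.
move=> k0 tourT cP kQ cR PQR QR.
have PQ : {in P & Q, forall p q, T p q} by move=> p q pP qQ; apply: PQR; rewrite ?inE ?qQ.
have PR : {in P & R, forall p r, T p r} by move=> p r pP rR; apply: PQR; rewrite ?inE ?rR ?orbT.
have dPQ := tournament_arcs_disjoint tourT PQ.
have dPR := tournament_arcs_disjoint tourT PR.
have dQR := tournament_arcs_disjoint tourT QR.
have cPR : #|P :|: R| = 2 * k by rewrite cardsU_disjoint // cP cR addnn mul2n.
set C := P :|: Q :|: R.
pose bad v := (#|[set c in C | T v c]| < k) || (#|[set c in C | T c v]| < k).
pose X := P :|: R :|: [set v | (v \notin C) && bad v].
have PRX : P :|: R \subset X by apply: subsetUl.
have QX : [disjoint Q & X].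
  rewrite -setI_eq0; apply/set0Pn => -[q]; rewrite !inE => /andP [qQ].
  by rewrite (disjointFl dPQ qQ) (disjointFr dQR qQ) qQ orbT.
have XP p : p \in P -> p \in X by move=> pP; rewrite (subsetP PRX) // inE pP.
have XR r : r \in R -> r \in X by move=> rR; rewrite (subsetP PRX) // inE rR orbT.
have XQ q : q \in Q -> (q \in X) = false by apply: disjointFr QX.
have PRQ_C : P :|: R :|: Q \subset C by rewrite setUAC.
exists X; apply: (k_strong_cyclic_triple (P := P) (Q := Q) (R := R)); rewrite ?cP ?cR //.
- by move=> p q pP qQ; rewrite /invert XP // XQ //= PQ.
- by move=> q r qQ rR; rewrite /invert XQ //= QR.
- by move=> r p rR pP; rewrite /invert XR // XP //= PR.
- by have := max_card (P :|: Q); rewrite cardsU_disjoint // cP; lia.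
- lia.
move=> v vC; have vPRQ : v \notin P :|: R :|: Q by rewrite setUAC.
have vPR : v \notin P :|: R by apply: contra vPRQ => /(subsetP (subsetUl _ Q)).
have [bv | good] := boolP (bad v); last first.
  have vX : (v \in X) = false by rewrite /X in_setU (negbTE vPR) in_set (negbTE good) andbF.
  move: good; rewrite negb_or -!leqNgt => /andP [kout kin]; split.
  - apply: leq_trans kout (subset_leq_card _).
    by apply/subsetP => c; rewrite !in_set /invert vX.
  - apply: leq_trans kin (subset_leq_card _).
    by apply/subsetP => c; rewrite !in_set /invert vX andbF.
have vX : v \in X by rewrite /X in_setU in_set vC bv orbT.
have kPR : 2 * k - 1 <= #|P :|: R| by rewrite cPR leq_subr.
exact: invert_repairs_low_degree tourT PRX QX PRQ_C vX vPRQ kPR kQ bv.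
Qed.

Section MinimumInversions.
Variables (V : finType) (P Q : rel V -> Prop) (D : rel V).

Lemma reachable_by_weaken m :
  (forall D', P D' -> Q D') -> reachable_by P D m -> reachable_by Q D m.
Proof. by move=> PQ [Xs [sizeXs PXs]]; exists Xs; split=> //; apply: PQ. Qed.

Lemma is_min_inv_le1 : reachable_by P D 1 -> exists2 s, is_min_inv P D s & s <= 1.
Proof.
move=> reach1; have [PD | nPD] := classic (P D).
  by exists 0 => //; split=> //; exists [::].
by exists 1 => //; split=> // -[|m] // [[|X Xs] [sizeXs PXs]].
Qed.

Lemma is_min_inv_mono s s' : (forall D', P D' -> Q D') ->
  is_min_inv P D s -> is_min_inv Q D s' -> s' <= s.
Proof. by move=> PQ [reach _] [_ min]; apply/min/(reachable_by_weaken PQ). Qed.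

End MinimumInversions.

Theorem theorem6p1 (V : finType) (T : rel V) (k : nat) :
  0 < k -> is_tournament T -> (2 * k - 1) * 2 ^ (2 * k) <= #|V| ->
  exists s s' : nat, [/\ is_sinv k T s, is_sinv' k T s', s' <= s & s <= 1].
Proof.
move=> k0 tourT leV.
have [P [Q [R [cP kQ cR PQR QR]]]] := tournament_ordered_triple tourT leV.
have [X strongX] := k_strong_invert_ordered_triple k0 tourT cP kQ cR PQR QR.
have reach1 : reachable_by (k_strong k) T 1 by exists [:: X].
have [s min_s le_s1] := is_min_inv_le1 reach1.
have strong_arc := @k_strong_arc_strong V k.
have [s' min_s' _] := is_min_inv_le1 (reachable_by_weaken strong_arc reach1).
by exists s, s'; split=> //; apply: is_min_inv_mono strong_arc min_s min_s'.
Qed.
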